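(* Let $\mathcal{Q}$ be a poset and let $M,N$ be finitely encoded persistence modules over $\mathcal{Q}$. Then there exist a finite poset $\mathcal P$, an order-preserving map $e\colon\mathcal{Q}\to\mathcal P$, pointwise finite-dimensional modules $M'',N''\colon\mathcal P\to\mathrm{Vect}$ and isomorphisms $M\cong e^*M''$ and $N\cong e^*N''$. Furthermore, if $M$ and $N$ both admit finite encodings of class $\mathfrak X$ for an algebra $\mathfrak X$ on $\mathcal{Q}$, then $e$ can be chosen so that all its fibers belong to $\mathfrak X$.
   Context: $\mathrm{Vect}$ is the category of finite-dimensional vector spaces over a field; a persistence module over $\mathcal{Q}$ is a functor $\mathcal{Q}\to\mathrm{Vect}$. A finite encoding of $M$ is an order-preserving map $e\colon\mathcal{Q}\to\mathcal P$ with $\mathcal P$ a finite poset, a pointwise finite-dimensional $M'\colon\mathcal P\to\mathrm{Vect}$ and an isomorphism $M\cong e^*M'=M'\circ e$; $M$ is finitely encoded if it admits one. An algebra on $\mathcal{Q}$ is a family of subsets containing $\emptyset$, closed under complements and finite unions; the encoding is of class $\mathfrak X$ if every fiber $e^{-1}(p)$ belongs to $\mathfrak X$. *)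

From HB Require Import structures.
From mathcomp Require Import all_boot all_order all_algebra.
Set Implicit Arguments. Unset Strict Implicit. Unset Printing Implicit Defensive.
Import Order.TTheory GRing.Theory.
Local Open Scope order_scope.

(* A persistence module over a poset Q with values in finite-dimensional
   K-vector spaces: a functor Q -> Vect (vectType K is finite-dimensional). *)
Record pmod (K : fieldType) (dQ : Order.disp_t) (Q : porderType dQ) := PMod {
  pm_sp : Q -> vectType K;
  pm_map : forall x y : Q, x <= y -> 'Hom(pm_sp x, pm_sp y);
  pm_id : forall (x : Q) (h : x <= x), pm_map h = \1%VF;
  pm_comp : forall (x y z : Q) (hxy : x <= y) (hyz : y <= z) (hxz : x <= z),
      pm_map hxz = (pm_map hyz \o pm_map hxy)%VF
}.

Definition monotone (dQ dP : Order.disp_t) (Q : porderType dQ) (P : porderType dP)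
  (e : Q -> P) := forall x y : Q, x <= y -> e x <= e y.

Section Pullback.
Variables (K : fieldType) (dQ dP : Order.disp_t) (Q : porderType dQ) (P : porderType dP).
Variables (e : Q -> P) (he : monotone e) (M : pmod K P).

Definition pull_sp (q : Q) : vectType K := pm_sp M (e q).
Definition pull_map (x y : Q) (h : x <= y) : 'Hom(pull_sp x, pull_sp y) :=
  pm_map M (he h).
Lemma pull_id (x : Q) (h : x <= x) : pull_map h = \1%VF.
Proof. exact: pm_id. Qed.
Lemma pull_comp (x y z : Q) (hxy : x <= y) (hyz : y <= z) (hxz : x <= z) :
  pull_map hxz = (pull_map hyz \o pull_map hxy)%VF.
Proof. exact: pm_comp. Qed.
Definition pullback : pmod K Q := PMod pull_id pull_comp.
End Pullback.

Definition pm_iso (K : fieldType) (dQ : Order.disp_t) (Q : porderType dQ)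
  (M N : pmod K Q) : Prop :=
  exists (f : forall q, 'Hom(pm_sp M q, pm_sp N q))
         (g : forall q, 'Hom(pm_sp N q, pm_sp M q)),
    (forall q, (g q \o f q)%VF = \1%VF /\ (f q \o g q)%VF = \1%VF) /\
    (forall (x y : Q) (h : x <= y),
        (f y \o pm_map M h)%VF = (pm_map N h \o f x)%VF).

Definition finitely_encoded (K : fieldType) (dQ : Order.disp_t) (Q : porderType dQ)
  (M : pmod K Q) : Prop :=
  exists (dP : Order.disp_t) (P : finPOrderType dP) (e : Q -> P) (he : monotone e)
         (M' : pmod K P), pm_iso M (pullback he M').

Definition is_algebra (Q : Type) (X : (Q -> Prop) -> Prop) : Prop :=
  X (fun _ => False) /\
  (forall A, X A -> X (fun q => ~ A q)) /\
  (forall A B, X A -> X B -> X (fun q => A q \/ B q)).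

Definition fibers_in (Q P : Type) (X : (Q -> Prop) -> Prop) (e : Q -> P) : Prop :=
  forall p : P, X (fun q => e q = p).

Definition finitely_encoded_class (K : fieldType) (dQ : Order.disp_t)
  (Q : porderType dQ) (X : (Q -> Prop) -> Prop) (M : pmod K Q) : Prop :=
  exists (dP : Order.disp_t) (P : finPOrderType dP) (e : Q -> P) (he : monotone e)
         (M' : pmod K P), fibers_in X e /\ pm_iso M (pullback he M').

From mathcomp Require Import all_boot all_order all_algebra.
From Stdlib Require Import FunctionalExtensionality PropExtensionality Classical.
Set Implicit Arguments. Unset Strict Implicit.
Import Order.TTheory.
Local Open Scope order_scope.

(* Two finite encodings e1 : Q -> P1 and e2 : Q -> P2 have the common
   refinement q |-> (e1 q, e2 q) into the finite product poset P1 x P2; each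
   module is the pullback of its encoding module along the corresponding
   projection.  The fibers of the refinement are the intersections of the
   fibers of e1 and e2, and an algebra of sets is closed under intersection. *)

Lemma algebraI (Q : Type) (X : (Q -> Prop) -> Prop) (A B : Q -> Prop) :
  is_algebra X -> X A -> X B -> X (fun q => A q /\ B q).
Proof.
move=> [_ [XC XU]] XA XB.
have := XC _ (XU _ _ (XC _ XA) (XC _ XB)); congr X.
apply: functional_extensionality => q; apply: propositional_extensionality.
by split=> [nAB | [Aq Bq] [] //]; split; apply: NNPP => ?; apply: nAB; [left | right].
Qed.

Section PullbackComp.
Variables (K : fieldType) (dQ dP dR : Order.disp_t).
Variables (Q : porderType dQ) (P : porderType dP) (R : porderType dR).
Variables (e : Q -> P) (pi : P -> R).
Variables (he : monotone e) (hpi : monotone pi) (hpie : monotone (pi \o e)).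

Lemma pullback_comp_map (M : pmod K R) (x y : Q) (h : x <= y) :
  pm_map (pullback he (pullback hpi M)) h = pm_map (pullback hpie M) h.
Proof. by rewrite /= /pull_map /= /pull_map (bool_irrelevance (hpi (he h)) (hpie h)). Qed.

Lemma pm_iso_pullback_comp (N : pmod K Q) (M : pmod K R) :
  pm_iso N (pullback hpie M) -> pm_iso N (pullback he (pullback hpi M)).
Proof.
case=> f [g [fK fnat]]; exists f, g; split=> // x y h.
by rewrite pullback_comp_map; exact: fnat.
Qed.
End PullbackComp.

Section ProductEncoding.
Variables (dQ dP1 dP2 : Order.disp_t) (Q : porderType dQ).
Variables (P1 : porderType dP1) (P2 : porderType dP2).
Variables (e1 : Q -> P1) (e2 : Q -> P2) (he1 : monotone e1) (he2 : monotone e2).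

Definition pair_enc (q : Q) : P1 *p P2 := (e1 q, e2 q).

Lemma monotone_pair_enc : monotone pair_enc.
Proof. by move=> x y h; rewrite leEprod /= he1 ?he2. Qed.

Lemma monotone_fst : monotone (fun p : P1 *p P2 => p.1).
Proof. by move=> x y; rewrite leEprod => /andP[]. Qed.

Lemma monotone_snd : monotone (fun p : P1 *p P2 => p.2).
Proof. by move=> x y; rewrite leEprod => /andP[]. Qed.

Lemma pm_iso_pullback_fst (K : fieldType) (M : pmod K Q) (M' : pmod K P1) :
  pm_iso M (pullback he1 M') ->
  pm_iso M (pullback monotone_pair_enc (pullback monotone_fst M')).
Proof. exact: pm_iso_pullback_comp. Qed.

Lemma pm_iso_pullback_snd (K : fieldType) (N : pmod K Q) (N' : pmod K P2) :
  pm_iso N (pullback he2 N') ->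
  pm_iso N (pullback monotone_pair_enc (pullback monotone_snd N')).
Proof. exact: pm_iso_pullback_comp. Qed.

Lemma fibers_in_pair_enc (X : (Q -> Prop) -> Prop) : is_algebra X ->
  fibers_in X e1 -> fibers_in X e2 -> fibers_in X pair_enc.
Proof.
move=> algX X1 X2 [p1 p2]; have := algebraI algX (X1 p1) (X2 p2); congr X.
apply: functional_extensionality => q; apply: propositional_extensionality.
by rewrite /pair_enc; split=> [[-> ->] | [-> ->]].
Qed.
End ProductEncoding.

Theorem mainTheorem19 (K : fieldType) (dQ : Order.disp_t) (Q : porderType dQ)
  (M N : pmod K Q) :
  finitely_encoded M -> finitely_encoded N ->
  (exists (dP : Order.disp_t) (P : finPOrderType dP) (e : Q -> P)
          (he : monotone e) (M'' N'' : pmod K P),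
      pm_iso M (pullback he M'') /\ pm_iso N (pullback he N'')) /\
  (forall X : (Q -> Prop) -> Prop, is_algebra X ->
     finitely_encoded_class X M -> finitely_encoded_class X N ->
     exists (dP : Order.disp_t) (P : finPOrderType dP) (e : Q -> P)
            (he : monotone e) (M'' N'' : pmod K P),
       fibers_in X e /\
       pm_iso M (pullback he M'') /\ pm_iso N (pullback he N'')).
Proof.
move=> [d1 [P1 [e1 [he1 [M' isoM]]]]] [d2 [P2 [e2 [he2 [N' isoN]]]]]; split.
  exists _, (P1 *p P2)%type, (pair_enc e1 e2), (monotone_pair_enc he1 he2).
  by do 2 eexists; split; [exact: pm_iso_pullback_fst isoM | exact: pm_iso_pullback_snd isoN].
move=> X algX [c1 [R1 [f1 [hf1 [M1 [fibM isoM1]]]]]] [c2 [R2 [f2 [hf2 [N1 [fibN isoN1]]]]]].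
exists _, (R1 *p R2)%type, (pair_enc f1 f2), (monotone_pair_enc hf1 hf2).
do 2 eexists; split; first exact: fibers_in_pair_enc.
by split; [exact: pm_iso_pullback_fst isoM1 | exact: pm_iso_pullback_snd isoN1].
Qed.
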